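(* Let $\mathcal{C}_W$, $R=\mathrm{Spec}(C^\infty(\mathbb{R}))$ and $H=\mathrm{Spec}(C^\infty[0,\infty))$ be as in the context, with the monomorphism $H\rightarrowtail R$ induced by the quotient $C^\infty(\mathbb{R})\to C^\infty[0,\infty)$, and let $\Gamma=\mathcal{C}_W(\mathbf{1},-):\mathcal{C}_W\to\mathbf{Set}$ be the points functor, so that $\Gamma R=\mathbb{R}$ and $\Gamma H=[0,\infty)$. Then for every morphism $v:X\to R$ in $\mathcal{C}_W$, $v$ factors through $H\rightarrowtail R$ if and only if $\Gamma v:\Gamma X\to\Gamma R=\mathbb{R}$ factors through $[0,\infty)\subseteq\mathbb{R}$.
   Context: A $C^\infty$-ring is a model of the algebraic theory whose $n$-ary operations are the smooth functions $\mathbb{R}^n\to\mathbb{R}$. $\mathrm{Aff}_{C^\infty}$ is the opposite of the category of finitely generated $C^\infty$-rings, with $\mathrm{Spec}\,A$ denoting $A$ as an object there; its terminal object is $\mathbf{1}=\mathrm{Spec}\,\mathbb{R}$, so points of $\mathrm{Spec}\,A$ are $C^\infty$-homomorphisms $A\to\mathbb{R}$. $\mathcal{C}$ is the full subcategory of objects $\mathrm{Spec}\,A$ with $A$ having exactly two idempotents and at least one point. A Weil algebra is a finite-dimensional $\mathbb{R}$-algebra $\mathbb{R}\oplus N$ with $N$ nilpotent. A $C^\infty$-ring $A$ is W-determined if the family of all $C^\infty$-homomorphisms $A\to W$ with $W$ a Weil algebra is jointly monic. $\mathcal{C}_W$ is the full subcategory of $\mathcal{C}$ of the $\mathrm{Spec}\,A$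 with $A$ W-determined. $C^\infty[0,\infty)=C^\infty(\mathbb{R})/I$ with $I$ the ideal of smooth functions vanishing on $[0,\infty)$; $H$ is an object of $\mathcal{C}_W$. *)

From HB Require Import structures.
From mathcomp Require Import all_boot all_order all_algebra.
From mathcomp Require Import all_classical all_reals all_analysis.
From mathcomp Require Import Rstruct Rstruct_topology.

Set Implicit Arguments. Unset Strict Implicit. Unset Printing Implicit Defensive.
Import Order.TTheory GRing.Theory Num.Theory.
Import numFieldNormedType.Exports.
Local Open Scope ring_scope.

Notation RR := Rdefinitions.R.

Fixpoint Dseq (n : nat) (vs : seq 'rV[RR]_n) (f : 'rV[RR]_n -> RR) : 'rV[RR]_n -> RR :=
  match vs with
  | [::] => f
  | v :: vs' => fun x => derive (Dseq vs' f : 'rV[RR]_n -> RR^o) x v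
  end.

Definition smooth (n : nat) (f : 'rV[RR]_n -> RR) : Prop :=
  forall vs : seq 'rV[RR]_n,
    continuous (Dseq vs f : 'rV[RR]_n -> RR^o) /\ forall v x, derivable (Dseq vs f : 'rV[RR]_n -> RR^o) x v.

(* C^infinity-rings: models of the Lawvere theory whose n-ary operations are
   the smooth maps R^n -> R (operations on non-smooth maps are junk and are
   never used). *)
Record CinfRing := {
  cr_car :> Type;
  cr_op : forall n : nat, ('rV[RR]_n -> RR) -> ('I_n -> cr_car) -> cr_car;
  cr_proj : forall n (i : 'I_n) (xs : 'I_n -> cr_car),
      cr_op (fun x => x ord0 i) xs = xs i;
  cr_comp : forall n m (f : 'rV[RR]_n -> RR) (g : 'I_n -> 'rV[RR]_m -> RR)
      (xs : 'I_m -> cr_car),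
      smooth f -> (forall j, smooth (g j)) ->
      cr_op (fun x => f (\row_j g j x)) xs = cr_op f (fun j => cr_op (g j) xs)
}.

Definition is_cinf_hom (A B : CinfRing) (phi : A -> B) : Prop :=
  forall n (f : 'rV[RR]_n -> RR) (xs : 'I_n -> A),
    smooth f -> phi (cr_op f xs) = cr_op f (fun i => phi (xs i)).

Definition Rcinf : CinfRing.
Proof.
refine (@Build_CinfRing RR (fun n f xs => f (\row_i xs i)) _ _).
- by move=> n i xs; rewrite mxE.
- by [].
Defined.

Section Ops.
Variable A : CinfRing.
Definition noargs : 'I_0 -> A :=
  fun i => False_rect _ (Bool.diff_false_true (etrans (esym (ltn0 i)) (ltn_ord i))).
Definition zeroA : A := cr_op (fun _ : 'rV[RR]_0 => 0) noargs.
Definition mulA (x y : A) : A :=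
  cr_op (fun v : 'rV[RR]_2 => v ord0 ord0 * v ord0 (lift ord0 ord0))
        (fun i : 'I_2 => if i == ord0 then x else y).
Definition prodA (m : nat) (xs : 'I_m -> A) : A :=
  cr_op (fun v : 'rV[RR]_m => \prod_(i < m) v ord0 i) xs.
Definition idempotent (e : A) : Prop := mulA e e = e.

Definition is_point (p : A -> RR) : Prop := @is_cinf_hom A Rcinf p.

Definition fin_gen : Prop :=
  exists n (g : 'I_n -> A), forall x : A,
    exists f : 'rV[RR]_n -> RR, smooth f /\ x = cr_op f g.

Definition exactly_two_idempotents : Prop :=
  exists e1 e2 : A, e1 <> e2 /\ forall e, idempotent e <-> (e = e1 \/ e = e2).
End Ops.

(* Weil algebra: finite-dimensional R-algebra R (+) N with N a nilpotent ideal
   (N = kernel of the augmentation eps), endowed with its (unique)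
   C^infinity-ring structure. *)
Definition is_weil (B : CinfRing) : Prop :=
  (exists k (b : 'I_k -> B), forall x : B,
      exists lam : 'I_k -> RR,
        x = cr_op (fun v : 'rV[RR]_k => \sum_(i < k) lam i * v ord0 i) b) /\
  (exists eps : B -> RR, is_point eps /\
     exists m : nat, forall xs : 'I_m -> B,
       (forall i, eps (xs i) = 0) -> prodA xs = zeroA B).

Definition W_determined (A : CinfRing) : Prop :=
  forall x y : A,
    (forall (W : CinfRing) (phi : A -> W), is_weil W -> is_cinf_hom phi ->
       phi x = phi y) -> x = y.

(* Spec A is an object of C_W *)
Definition in_CW (A : CinfRing) : Prop :=
  fin_gen A /\ exactly_two_idempotents A /\ (exists p, @is_point A p) /\
  W_determined A.

(* If p(a) < 0 for some point p, apply to a the operation t |-> exp(1/t) for t < 0, 0 for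
   t >= 0, which vanishes on [0, oo): the result is 0, yet p maps it to exp(1/p(a)) <> 0.
   Conversely, as A is W-determined, it suffices to show that f(phi a) = 0 in every Weil
   algebra W = R + N, with augmentation eps and N^m = 0, for every f vanishing on [0, oo).
   Put c = eps(phi a) >= 0.  All derivatives of f vanish on [c, oo), so g(t) = f(t + c)/t^(m-1)
   (extended by 0 for t >= 0) is smooth and f(x) = g(x - c) (x - c)^(m-1); this is a product of
   m elements of N, hence 0.  Smoothness of g and of exp(1/t) comes from families of functions
   h(t)/t^n that are closed under differentiation, h being flat at 0 from the left. *)

From mathcomp Require Import all_boot all_order all_algebra.
From mathcomp Require Import all_classical all_reals all_analysis.
From mathcomp Require Import Rstruct Rstruct_topology.
From mathcomp Require Import ring.
Import Order.TTheory GRing.Theory Num.Theory.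
Import numFieldNormedType.Exports.
Local Open Scope classical_set_scope.
Local Open Scope ring_scope.
Set Implicit Arguments. Unset Strict Implicit. Unset Printing Implicit Defensive.

Section RealSmooth.
Variable R : realType.
Implicit Types (f g : R -> R) (t : R).

Definition derivative_seq (d : nat -> R -> R) :=
  forall k t, is_derive t 1 (d k) (d k.+1 t).

Definition smooth1 f := exists d, d 0%N = f /\ derivative_seq d.

Definition flat g := forall (N : nat) (e : R), 0 < e ->
  exists2 r : R, 0 < r & forall h, - r < h -> h < 0 -> `|g h| <= e * `|h| ^+ N.

Definition quot_pow (n : nat) g t : R := if t < 0 then g t / t ^+ n else 0.

Lemma quot_pow_lt0 n g t : t < 0 -> quot_pow n g t = g t / t ^+ n.
Proof. by rewrite /quot_pow => ->. Qed.

Lemma quot_pow_ge0 n g t : 0 <= t -> quot_pow n g t = 0.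
Proof. by rewrite /quot_pow ltNge => ->. Qed.

Lemma is_derive_continuous f (df : R -> R) :
  (forall t, is_derive t 1 f (df t)) -> continuous f.
Proof.
move=> f' t; apply/differentiable_continuous/derivable1_diffP.
by case: (f' t).
Qed.

Section QuotPowDerivative.
Variables (g g' : R -> R) (n : nat).

Let quot_pow' t := quot_pow n g' t - n%:R * quot_pow n.+1 g t.

Lemma is_derive_quot_pow_lt0 t : t < 0 -> is_derive t 1 g (g' t) ->
  is_derive t 1 (quot_pow n g) (quot_pow' t).
Proof.
move=> t0 dg.
have tn0 : (idfun ^+ n) t != 0 :> R by rewrite exprfctE expf_neq0 ?ltr0_neq0.
have dV := is_deriveV tn0 (is_deriveX n (is_derive_id t 1)).
apply: near_eq_is_derive (is_derive_eq (is_deriveM dg dV) _).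
  by near=> s; rewrite quot_pow_lt0 ?exprfctE //; near: s; exact: lt_nbhsl.
rewrite /quot_pow' !quot_pow_lt0 //= !exprfctE /= [_%:A]mulr1 /GRing.scale /=.
case: n {tn0 dV} => [|k] /=; rewrite ?expr0 ?exprS.
  by rewrite !(expr0, mul0r, mulr0, mul1r, mulr1, invr1, add0r, subr0).
by field; rewrite expf_neq0 ?ltr0_neq0.
Unshelve. all: end_near.
Qed.

Lemma is_derive_quot_pow_gt0 t : 0 < t -> is_derive t 1 (quot_pow n g) (quot_pow' t).
Proof.
move=> t0; rewrite /quot_pow' !quot_pow_ge0 ?ltW // mulr0 subr0.
apply: (near_eq_is_derive _ (is_derive_cst (0 : R) t 1)).
by near=> s; rewrite quot_pow_ge0 // ltW //; near: s; exact: lt_nbhsr.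
Unshelve. all: end_near.
Qed.

Lemma is_derive_quot_pow0 : flat g -> is_derive (0 : R) 1 (quot_pow n g) (quot_pow' 0).
Proof.
move=> flat_g; rewrite /quot_pow' !quot_pow_ge0 // mulr0 subr0.
have dq0 : (fun h : R => h^-1 *: ((quot_pow n g \o shift 0) (h *: 1) - quot_pow n g 0))
    @ 0^' --> (0 : R).
  apply/cvgrPdist_le => e e0.
  have [r r0 small_g] := flat_g n.+1 e e0.
  exists r => //= h /=; rewrite sub0r normrN ltr_norml => /andP[hr _] hn0.
  rewrite [h%:A]mulr1 addr0 (quot_pow_ge0 n g (lexx 0)) subr0 sub0r normrN.
  have [hneg|hpos] := ltrP h 0; last by rewrite quot_pow_ge0 // /GRing.scale /= mulr0 normr0 ltW.
  rewrite quot_pow_lt0 // /GRing.scale /= normrM normfV normrM normfV normrX.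
  rewrite mulrCA -invfM -exprS ler_pdivrMr ?exprn_gt0 ?normr_gt0 //.
  exact: small_g.
by apply: DeriveDef; [apply/cvg_ex; exists 0 | exact: cvg_lim].
Qed.

End QuotPowDerivative.

Lemma is_derive_quot_pow g g' (n : nat) t :
  flat g -> (forall s : R, s < 0 -> is_derive s 1 g (g' s)) ->
  is_derive t 1 (quot_pow n g) (quot_pow n g' t - n%:R * quot_pow n.+1 g t).
Proof.
move=> flat_g dg; have [t0|] := ltrP t 0; first exact: is_derive_quot_pow_lt0 (dg t t0).
rewrite le_eqVlt => /predU1P[<-|]; first exact: is_derive_quot_pow0.
exact: is_derive_quot_pow_gt0.
Qed.

Section DerivationClosedFamily.
Variables (I : Type) (B : I -> R -> R) (dB : I -> seq (R * I)).

Definition lincomb (L : seq (R * I)) t : R := \sum_(p <- L) p.1 * B p.2 t.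

Definition lincomb_deriv (L : seq (R * I)) : seq (R * I) :=
  flatten [seq [seq (p.1 * q.1, q.2) | q <- dB p.2] | p <- L].

Hypothesis is_derive_B : forall i t, is_derive t 1 (B i) (lincomb (dB i) t).

Lemma lincomb_scale a L t : lincomb [seq (a * q.1, q.2) | q <- L] t = a * lincomb L t.
Proof. by rewrite /lincomb big_map mulr_sumr; apply: eq_bigr => q _; rewrite mulrA. Qed.

Lemma is_derive_lincomb L t : is_derive t 1 (lincomb L) (lincomb (lincomb_deriv L) t).
Proof.
elim: L => [|p L IH].
  have -> : lincomb [::] = cst 0 by apply/funext => s; rewrite /lincomb big_nil.
  exact: is_derive_cst.
have -> : lincomb (p :: L) = p.1 *: B p.2 + lincomb L.
  by apply/funext => s; rewrite /lincomb big_cons.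
rewrite /lincomb_deriv /= {2}/lincomb big_cat -/(lincomb _ _) lincomb_scale.
exact: is_deriveD (is_deriveZ _ _) IH.
Qed.

Lemma smooth1_derivation_closed i : smooth1 (B i).
Proof.
exists (fun k => lincomb (iter k lincomb_deriv [:: (1, i)])); split; last first.
  by move=> k t; exact: is_derive_lincomb.
by apply/funext => t; rewrite /lincomb big_seq1 mul1r.
Qed.

End DerivationClosedFamily.

Lemma bound_of_derivative_bound f df (r e : R) (i : nat) :
  (forall t, is_derive t 1 f (df t)) -> f 0 = 0 ->
  (forall y, - r < y -> y < 0 -> `|df y| <= e * `|y| ^+ i) ->
  forall y, - r < y -> y < 0 -> `|f y| <= e * `|y| ^+ i.+1.
Proof.
move=> f' f0 df_small y ry y0.
have [c /andP[yc c0] fc] := MVT y0 (fun t _ => f' t)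
  (continuous_subspaceT (is_derive_continuous f')).
rewrite f0 !sub0r in fc; rewrite -normrN fc normrM normrN exprSr mulrA.
rewrite ler_pM2r ?normr_gt0 ?ltr0_neq0 //.
have dfc := df_small c (lt_trans ry yc) c0.
apply: (le_trans dfc).
have e0 : 0 <= e.
  have cp : 0 < `|c| ^+ i by rewrite exprn_gt0 // normr_gt0 ltr0_neq0.
  by rewrite -(pmulr_lge0 _ cp); exact: le_trans (normr_ge0 _) dfc.
rewrite ler_wpM2l // lerXn2r ?nnegrE ?normr_ge0 //.
by rewrite !ltr0_norm // lerN2 ltW.
Qed.

Section VanishingOnHalfLine.
Variables (d : nat -> R -> R) (d_deriv : derivative_seq d).
Hypothesis d0_vanish : forall t, 0 <= t -> d 0%N t = 0.

Lemma derivative_seq_vanish j t : 0 <= t -> d j t = 0.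
Proof.
elim: j t => [|j IH] t t0; first exact: d0_vanish.
have dj_pos s : 0 < s -> d j.+1 s = 0.
  move=> s0; have dj0 : is_derive s 1 (d j) 0.
    apply: (near_eq_is_derive _ (is_derive_cst (0 : R) s 1)).
    by near=> u; rewrite IH // ltW //; near: u; exact: lt_nbhsr.
  by rewrite -(@derive_val _ _ _ _ _ _ _ (d_deriv j s)) (@derive_val _ _ _ _ _ _ _ dj0).
move: t0; rewrite le_eqVlt => /predU1P[<-|]; last exact: dj_pos.
have lim_dj : d j.+1 x @[x --> (0 : R)^'+] --> d j.+1 0.
  exact/cvg_at_right_filter/(is_derive_continuous (d_deriv j.+1)).
have lim0 : d j.+1 x @[x --> (0 : R)^'+] --> (0 : R).
  by apply: cvg_near_cst; near=> s; apply: dj_pos; near: s; exact: nbhs_right_gt.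
exact: cvg_unique lim_dj lim0.
Unshelve. all: end_near.
Qed.

Lemma derivative_seq_flat j : flat (d j).
Proof.
(* [d (N + j)] is small near [0], where all the [d k] vanish; integrate [N] times. *)
move=> N e e0.
have := @is_derive_continuous _ _ (d_deriv (N + j)%N) 0.
move=> /cvgrPdist_le /(_ e e0) [r r0 near0]; exists r => //.
suff bound i k : (forall y, - r < y -> y < 0 -> `|d (i + k)%N y| <= e) ->
    forall y, - r < y -> y < 0 -> `|d k y| <= e * `|y| ^+ i.
  apply: bound => y ry y0; have := near0 y.
  rewrite /= derivative_seq_vanish // !sub0r !normrN ltr0_norm // ltrNl; exact.
elim: i k => [|i IH] k dik y ry y0; first by rewrite expr0 mulr1; exact: dik.
apply: (bound_of_derivative_bound (d_deriv k)) ry y0; first exact: derivative_seq_vanish.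
by apply: IH => z rz z0; rewrite -addSnnS; exact: dik.
Qed.

Lemma smooth1_quot_pow n : smooth1 (quot_pow n (d 0%N)).
Proof.
pose B (p : nat * nat) := quot_pow p.1 (d p.2).
pose dB (p : nat * nat) := [:: (1 : R, (p.1, p.2.+1)); (- p.1%:R, (p.1.+1, p.2))].
have is_derive_B p t : is_derive t 1 (B p) (lincomb B (dB p) t).
  rewrite /lincomb !big_cons big_nil /= addr0 mul1r mulNr.
  by apply: is_derive_quot_pow; [exact: derivative_seq_flat | move=> s _; exact: d_deriv].
exact: (smooth1_derivation_closed is_derive_B (n, 0%N)).
Qed.

End VanishingOnHalfLine.

Definition expinv t : R := if t < 0 then expR t^-1 else 0.

Lemma expinv_flat : flat expinv.
Proof.
move=> N e e0; pose c : R := N.+1`!%:R.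
have c0 : 0 < c by rewrite ltr0n fact_gt0.
exists (e / c) => [|h he h0]; first by rewrite divr_gt0.
have hn : 0 < `|h| by rewrite normr_gt0 ltr0_neq0.
have hinv : - h^-1 = `|h|^-1 by rewrite ltr0_norm // invrN.
rewrite /expinv h0 ger0_norm ?expR_ge0 // -[h^-1]opprK expRN hinv.
have exp_ge : `|h|^-1 ^+ N.+1 / c <= expR `|h|^-1.
  by apply: le_trans (expR_ge1Dxn N (ltW _)); rewrite ?lerDr ?invr_gt0.
apply: (@le_trans _ _ (`|h|^-1 ^+ N.+1 / c)^-1).
  by rewrite lef_pV2 ?posrE ?expR_gt0 // divr_gt0 // exprn_gt0 // invr_gt0.
rewrite invfM invrK exprVn invrK exprS mulrAC ler_wpM2r ?exprn_ge0 //.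
by rewrite -ler_pdivlMr // ltr0_norm // lerNl ltW.
Qed.

Lemma is_derive_expinv t : t < 0 -> is_derive t 1 expinv (- quot_pow 2 expinv t).
Proof.
move=> t0.
have dinv := is_deriveV (ltr0_neq0 t0) (is_derive_id t 1).
apply: near_eq_is_derive (is_derive_eq (is_derive1_comp (is_derive_expR _) dinv) _).
  by near=> s; rewrite /expinv ifT //; near: s; exact: lt_nbhsl.
by rewrite quot_pow_lt0 // /expinv t0 /GRing.scale /= mulr1 mulrN.
Unshelve. all: end_near.
Qed.

Lemma smooth1_expinv : smooth1 expinv.
Proof.
pose dB (n : nat) := [:: (-1 : R, n.+2); (- n%:R, n.+1)].
have is_derive_B n t : is_derive t 1 (quot_pow n expinv) (lincomb (quot_pow ^~ expinv) (dB n) t).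
  rewrite /lincomb !big_cons big_nil /= addr0 mulN1r mulNr.
  apply: is_derive_eq.
    exact: (@is_derive_quot_pow _ (fun s => - quot_pow 2 expinv s) n t
      expinv_flat is_derive_expinv).
  congr (_ - _); rewrite /quot_pow; case: ifP => t0; last by rewrite oppr0.
  by rewrite t0 mulNr -mulrA -invfM -exprD add2n.
have -> : expinv = quot_pow 0 expinv.
  by apply/funext => t; rewrite /quot_pow /expinv; case: ifP; rewrite ?expr0 ?divr1.
exact: (smooth1_derivation_closed is_derive_B 0%N).
Qed.

End RealSmooth.

Section SmoothExpressions.
Variables (R : realType) (n : nat).
Local Notation V := 'rV[R]_n.
Implicit Types (f : V -> R) (x u : V).

(* [Dseq] over an arbitrary [realType]; the two agree on [Rdefinitions.R] ([DseqE]). *)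
Fixpoint iter_derive (vs : seq V) f : V -> R :=
  if vs is v :: vs' then fun x => derive (iter_derive vs' f : V -> R^o) x v else f.

Definition is_smooth f := forall vs : seq V,
  continuous (iter_derive vs f : V -> R^o) /\
  forall v x, derivable (iter_derive vs f : V -> R^o) x v.

Lemma is_derive_lineE f x u (D : R) :
  is_derive x u (f : V -> R^o) D <-> is_derive (0 : R) 1 (fun h : R => f (h *: u + x)) D.
Proof.
have quotE : (fun h : R => h^-1 *: (((f : V -> R^o) \o shift x) (h *: u) - f x)) =
    (fun h : R => h^-1 *: (((fun h => f (h *: u + x)) \o shift 0) (h *: 1) - f (0 *: u + x))).
  by apply/funext => h /=; rewrite addr0 scale0r add0r [_%:A]mulr1.
by split=> -[dfx <-]; apply: DeriveDef; rewrite /derivable /derive quotE in dfx *.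
Qed.

Lemma is_derive_comp_real f (phi : R -> R) x u (D P : R) :
  is_derive x u (f : V -> R^o) D -> is_derive (f x) 1 phi P ->
  is_derive x u ((phi \o f) : V -> R^o) (P * D).
Proof.
move=> /is_derive_lineE df dphi; apply/is_derive_lineE.
by apply: is_derive1_comp df; rewrite /= scale0r add0r.
Qed.

Lemma is_derive_coord (i : 'I_n) x u :
  is_derive x u ((fun y : V => y ord0 i) : V -> R^o) (u ord0 i).
Proof.
apply/is_derive_lineE.
have -> : (fun h : R => (h *: u + x) ord0 i) = (fun h => h * u ord0 i + x ord0 i).
  by apply/funext => h; rewrite !mxE.
have := is_deriveD (is_deriveM (is_derive_id (0 : R) 1) (is_derive_cst (u ord0 i) (0 : R) 1))
  (is_derive_cst (x ord0 i) (0 : R) 1).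
by rewrite scaler0 add0r addr0 [_%:A]mulr1.
Qed.

(* Syntax for a class of smooth functions closed under directional derivation [sderive]. *)
Inductive sexpr :=
| SConst of R
| SCoord of 'I_n
| SAdd of sexpr & sexpr
| SMul of sexpr & sexpr
| SApp of (nat -> R -> R) & nat & sexpr.

Fixpoint seval (e : sexpr) x : R :=
  match e with
  | SConst r => r
  | SCoord i => x ord0 i
  | SAdd a b => seval a x + seval b x
  | SMul a b => seval a x * seval b x
  | SApp d k a => d k (seval a x)
  end.

Fixpoint sexpr_wf (e : sexpr) : Prop :=
  match e with
  | SAdd a b | SMul a b => sexpr_wf a /\ sexpr_wf b
  | SApp d _ a => derivative_seq d /\ sexpr_wf a
  | _ => True
  end.

Fixpoint sderive u (e : sexpr) : sexpr :=
  match e with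
  | SConst _ => SConst 0
  | SCoord i => SConst (u ord0 i)
  | SAdd a b => SAdd (sderive u a) (sderive u b)
  | SMul a b => SAdd (SMul (sderive u a) b) (SMul a (sderive u b))
  | SApp d k a => SMul (SApp d k.+1 a) (sderive u a)
  end.

Lemma sexpr_wf_sderive u e : sexpr_wf e -> sexpr_wf (sderive u e).
Proof.
elim: e => //= [a IHa b IHb|a IHa b IHb|d k a IHa] [wa wb].
- by split; [exact: IHa | exact: IHb].
- by do !split => //; [exact: IHa | exact: IHb].
- by do !split => //; exact: IHa.
Qed.

Lemma sexpr_wf_sderives vs e : sexpr_wf e -> sexpr_wf (foldr sderive e vs).
Proof. by move=> wf_e; elim: vs => //= v vs; exact: sexpr_wf_sderive. Qed.

Lemma continuous_seval e : sexpr_wf e -> continuous (seval e : V -> R^o).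
Proof.
elim: e => /= [r|i|a IHa b IHb|a IHa b IHb|d k a IHa] wf_e x.
- exact: cst_continuous.
- exact: coord_continuous.
- by case: wf_e => /IHa ca /IHb cb; exact: continuousD (ca x) (cb x).
- by case: wf_e => /IHa ca /IHb cb; exact: continuousM (ca x) (cb x).
- case: wf_e => d_deriv /IHa ca.
  apply: (continuous_comp (f := seval a) (g := d k)); first exact: ca.
  exact: (@is_derive_continuous _ _ _ (d_deriv k)).
Qed.

Lemma is_derive_seval e x u : sexpr_wf e ->
  is_derive x u (seval e : V -> R^o) (seval (sderive u e) x).
Proof.
elim: e => /= [r|i|a IHa b IHb|a IHa b IHb|d k a IHa] wf_e.
- exact: is_derive_cst.
- exact: is_derive_coord.
- by case: wf_e => /IHa da /IHb db; exact: is_deriveD.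
- case: wf_e => /IHa da /IHb db; apply: is_derive_eq.
  by rewrite /GRing.scale /= addrC mulrC [seval a x * _]mulrC.
- by case: wf_e => d_deriv /IHa da; exact: is_derive_comp_real da (d_deriv k _).
Qed.

Lemma iter_derive_seval vs e : sexpr_wf e ->
  iter_derive vs (seval e) = seval (foldr sderive e vs).
Proof.
move=> wf_e; elim: vs => //= v vs ->; apply/funext => x.
by rewrite (@derive_val _ _ _ _ _ _ _ (is_derive_seval x v (sexpr_wf_sderives vs wf_e))).
Qed.

Lemma is_smooth_seval e : sexpr_wf e -> is_smooth (seval e).
Proof.
move=> wf_e vs; rewrite iter_derive_seval //; have wf_vs := sexpr_wf_sderives vs wf_e.
by split=> [|v x]; [exact: continuous_seval | case: (is_derive_seval x v wf_vs)].
Qed.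

End SmoothExpressions.

Lemma derivative_seq_restrict (R : realType) (F : 'rV[R]_1 -> R) (c : R) : is_smooth F ->
  derivative_seq (fun k t => iter_derive (nseq k (const_mx 1)) F (const_mx (t + c))).
Proof.
move=> sF k t; have [_ dF] := sF (nseq k (const_mx 1)).
set G := iter_derive _ F.
have quotE : (fun h : R => h^-1 *: (((fun s => G (const_mx (s + c))) \o shift t) (h *: 1)
      - G (const_mx (t + c)))) =
    (fun h : R => h^-1 *: (((G : 'rV[R]_1 -> R^o) \o shift (const_mx (t + c))) (h *: const_mx 1)
      - G (const_mx (t + c)))).
  by apply/funext => h /=; congr (_ *: (G _ - _)); apply/matrixP => i j; rewrite !mxE addrA.
by apply: DeriveDef; rewrite /derivable /derive quotE //; exact: dF.
Qed.

Lemma DseqE n vs (f : 'rV[RR]_n -> RR) : Dseq vs f = iter_derive vs f.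
Proof. by elim: vs => //= v vs ->. Qed.

Lemma smoothE n (f : 'rV[RR]_n -> RR) : smooth f <-> is_smooth f.
Proof. by split=> sf vs; have := sf vs; rewrite DseqE. Qed.

Lemma smooth_seval n (e : sexpr RR n) : sexpr_wf e -> smooth (seval e).
Proof. by move=> wf_e; apply/smoothE/is_smooth_seval. Qed.

Lemma smooth_cst n (c : RR) : smooth (fun _ : 'rV[RR]_n => c).
Proof. exact: (@smooth_seval n (SConst n c)). Qed.

Lemma smooth_coord n (i : 'I_n) : smooth (fun x : 'rV[RR]_n => x ord0 i).
Proof. exact: (@smooth_seval n (@SCoord RR n i)). Qed.

Lemma smooth_coord_sub n (i : 'I_n) (c : RR) : smooth (fun x : 'rV[RR]_n => x ord0 i - c).
Proof. exact: (@smooth_seval n (SAdd (@SCoord RR n i) (SConst n (- c)))). Qed.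

Lemma smooth_comp_coord_sub n (i : 'I_n) (c : RR) g :
  smooth1 g -> smooth (fun x : 'rV[RR]_n => g (x ord0 i - c)).
Proof.
case=> d [<- d_deriv].
exact: (@smooth_seval n (SApp d 0 (SAdd (@SCoord RR n i) (SConst n (- c))))).
Qed.

Lemma smooth_prod n : smooth (fun x : 'rV[RR]_n => \prod_(i < n) x ord0 i).
Proof.
pose e := \big[@SMul RR n/SConst n 1]_(i < n) @SCoord RR n i.
have -> : (fun x : 'rV[RR]_n => \prod_(i < n) x ord0 i) = seval e.
  by apply/funext => x; rewrite /e; elim/big_rec2: _ => //= i r e' _ ->.
by apply: smooth_seval; rewrite /e; elim/big_rec: _ => //= i e' _ ->.
Qed.

Section CinfRingFacts.
Variable A : CinfRing.

Lemma noargsE (T : Type) (xs ys : 'I_0 -> T) : xs = ys.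
Proof. by apply/funext => -[]. Qed.

Lemma cr_op_cst n (c : RR) (xs : 'I_n -> A) :
  cr_op (fun _ : 'rV[RR]_n => c) xs = cr_op (fun _ : 'rV[RR]_0 => c) (noargs A).
Proof.
have := @cr_comp A 0 n (fun _ => c) (fun _ _ => 0) xs (smooth_cst c) (fun _ => smooth_cst 0).
by move=> /= ->; congr cr_op; exact: noargsE.
Qed.

Lemma cr_op0 n (xs : 'I_n -> A) : cr_op (fun _ : 'rV[RR]_n => 0) xs = zeroA A.
Proof. exact: cr_op_cst. Qed.

Lemma cr_op_prod m (gs : 'I_m -> 'rV[RR]_1 -> RR) (f : 'rV[RR]_1 -> RR) (xs : 'I_1 -> A) :
  (forall i, smooth (gs i)) -> (forall x, f x = \prod_(i < m) gs i x) ->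
  cr_op f xs = prodA (fun i => cr_op (gs i) xs).
Proof.
move=> sgs fE; rewrite /prodA -(cr_comp _ (@smooth_prod m) sgs).
by congr cr_op; apply/funext => x; rewrite fE; apply: eq_bigr => i _; rewrite mxE.
Qed.

(* With [1 = 0], every [x = x * 1] equals [x * 0 = 0]. *)
Lemma cinf_trivial : cr_op (fun _ : 'rV[RR]_0 => 1) (noargs A) = zeroA A ->
  forall x : A, x = zeroA A.
Proof.
move=> one0 x; pose gs (c : RR) (i : 'I_2) (v : 'rV[RR]_1) := if i == ord0 then v ord0 ord0 else c.
have sgs c i : smooth (gs c i).
  by rewrite /gs; case: (i == ord0); [exact: smooth_coord | exact: smooth_cst].
have gsE c v : \prod_(i < 2) gs c i v = v ord0 ord0 * c by rewrite big_ord_recr big_ord1.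
rewrite -[x](@cr_proj A 1 ord0 (fun _ => x)) (@cr_op_prod 2 (gs 1)) // => [|v]; last first.
  by rewrite gsE mulr1.
have -> : (fun i => cr_op (gs 1 i) (fun _ => x)) = (fun i => cr_op (gs 0 i) (fun _ => x)).
  by apply/funext => i; rewrite /gs; case: (i == ord0) => //; rewrite cr_op_cst one0 cr_op0.
by rewrite -(@cr_op_prod 2 (gs 0) (fun _ => 0)) ?cr_op0 // => v; rewrite gsE mulr0.
Qed.

End CinfRingFacts.

Lemma cinf_hom_comp (A B C : CinfRing) (phi : A -> B) (psi : B -> C) :
  is_cinf_hom phi -> is_cinf_hom psi -> is_cinf_hom (psi \o phi).
Proof. by move=> hphi hpsi n f xs sf /=; rewrite hphi // hpsi. Qed.

Lemma cinf_hom_zero (A B : CinfRing) (phi : A -> B) : is_cinf_hom phi -> phi (zeroA A) = zeroA B.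
Proof.
move=> hphi; rewrite /zeroA hphi; last exact: smooth_cst.
by congr cr_op; exact: noargsE.
Qed.

Lemma vanishing_halfline_factor (F : 'rV[RR]_1 -> RR) (c : RR) (k : nat) :
  smooth F -> (forall x : 'rV[RR]_1, 0 <= x ord0 ord0 -> F x = 0) -> 0 <= c ->
  exists g, [/\ smooth1 g, g 0 = 0 &
    forall x : 'rV[RR]_1, F x = g (x ord0 ord0 - c) * (x ord0 ord0 - c) ^+ k].
Proof.
move=> sF F0 c0.
pose d j t := iter_derive (nseq j (const_mx 1)) F (const_mx (t + c)).
have d_deriv : derivative_seq d := derivative_seq_restrict c ((smoothE F).1 sF).
have d0_vanish t : 0 <= t -> d 0%N t = 0 by move=> t0; rewrite /d /= F0 // mxE addr_ge0.
exists (quot_pow k (d 0%N)); split; first exact: smooth1_quot_pow.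
  exact: quot_pow_ge0.
move=> x; rewrite /quot_pow; case: ifPn => [xc|].
  rewrite mulfVK ?expf_neq0 ?ltr0_neq0 // /d /= subrK.
  by congr F; apply/matrixP => i j; rewrite !ord1 mxE.
by rewrite -leNgt subr_ge0 mul0r => cx; rewrite F0 // (le_trans c0 cx).
Qed.

Definition factors_through_halfline (A : CinfRing) (a : A) : Prop :=
  forall f : 'rV[RR]_1 -> RR, smooth f -> (forall x : 'rV[RR]_1, 0 <= x ord0 ord0 -> f x = 0) ->
  cr_op f (fun _ : 'I_1 => a) = zeroA A.

(* Write [f = g(x - c) (x - c)^k] with [c = eps w]: a product of [k + 1] elements of the
   augmentation ideal, which vanishes by nilpotency. *)
Lemma weil_factors_through_halfline (W : CinfRing) (w : W) : is_weil W ->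
  (forall p, is_point p -> 0 <= p w) -> factors_through_halfline w.
Proof.
move=> [_ [eps [eps_pt [m nil_m]]]] w_ge0 f sf f0.
case: m nil_m => [|k] nil_m.
  apply: cinf_trivial; rewrite -(nil_m (noargs W)) => [|[]//].
  by rewrite /prodA; congr cr_op; apply/funext => v; rewrite big_ord0.
have [g [sg g0 fE]] := vanishing_halfline_factor k sf f0 (w_ge0 _ eps_pt).
pose gs (i : 'I_k.+1) (x : 'rV[RR]_1) :=
  if i == ord0 then g (x ord0 ord0 - eps w) else x ord0 ord0 - eps w.
have sgs i : smooth (gs i).
  by rewrite /gs; case: (i == ord0); [exact: smooth_comp_coord_sub | exact: smooth_coord_sub].
rewrite (@cr_op_prod W k.+1 gs) // => [|x]; last first.
  by rewrite big_ord_recl /= prodr_const card_ord /gs eqxx fE.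
apply: nil_m => i; rewrite eps_pt //= /gs mxE subrr.
by case: (i == ord0).
Qed.

Lemma points_nonneg_of_factors_through_halfline (A : CinfRing) (a : A) :
  factors_through_halfline a -> forall p, is_point p -> 0 <= p a.
Proof.
move=> a_factors p p_pt; rewrite leNgt; apply/negP => pa_lt0.
have sf := @smooth_comp_coord_sub 1 ord0 0 _ (@smooth1_expinv RR).
have f0 (x : 'rV[RR]_1) : 0 <= x ord0 ord0 -> expinv (x ord0 ord0 - 0) = 0.
  by rewrite subr0 /expinv ltNge => ->.
have := congr1 p (a_factors _ sf f0).
rewrite (cinf_hom_zero p_pt) p_pt //= mxE subr0 /expinv pa_lt0 => /eqP.
by rewrite expR_eq0.
Qed.

Lemma factors_through_halfline_of_points_nonneg (A : CinfRing) (a : A) : W_determined A ->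
  (forall p, is_point p -> 0 <= p a) -> factors_through_halfline a.
Proof.
move=> A_Wdet a_ge0 f sf f0; apply: A_Wdet => W phi W_weil phi_hom.
rewrite (cinf_hom_zero phi_hom) phi_hom //.
apply: (weil_factors_through_halfline W_weil) => // p p_pt.
exact: (a_ge0 _ (cinf_hom_comp phi_hom p_pt)).
Qed.

Theorem corollary5p4 (A : CinfRing) (a : A) :
  in_CW A ->
  ((forall f : 'rV[RR]_1 -> RR, smooth f ->
      (forall x : 'rV[RR]_1, 0 <= x ord0 ord0 -> f x = 0) ->
      cr_op f (fun _ : 'I_1 => a) = zeroA A)
   <->
   (forall p : A -> RR, is_point p -> 0 <= p a)).
Proof.
move=> [_ [_ [_ A_Wdet]]]; split.
  exact: points_nonneg_of_factors_through_halfline.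
exact: factors_through_halfline_of_points_nonneg.
Qed.
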